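(* Let $n\ge2$ and let $S=S_1S_2\cdots$ be as defined in the context. Suppose $\mathrm{PPM}^*$ has already processed $S_1\cdots S_{n-1}$. Then once it has processed the first $2^n+n$ bits of $S_n$ (i.e. $S_n[0..2^n+n-1]$), its model contains a context for every $w\in\{0,1\}^n$.
   Context: Strings are indexed from $0$; $x[i..j]$ is the substring from position $i$ to $j$; $x^j$ is $j$-fold concatenation. de Bruijn strings: for $n\ge1$, a de Bruijn string of order $n$ is a binary string $x$ of length $2^n$ such that every $w\in\{0,1\}^n$ occurs exactly once as a substring of $x\cdot x[0..n-2]$. $db(n)$ is the lexicographically least one, produced by Martin's algorithm: start with $x=1^{n-1}$; while possible, append a bit (preferring $0$ over $1$) so that all length-$n$ substrings of $x$ remain distinct; then delete the prefix $1^{n-1}$. For $0\le i<2^n$, $db_i(n)=db(n)[i..2^n-1]\cdot db(n)[0..i-1]$. The sequence $S$: for $n\ge1$ write $n=2^st$ with $t$ odd, let $B_{n,i}=db_i(n)^t$ for $0\le i<2^s$, $S_n=B_{n,0}B_{n,1}\cdots B_{n,2^s-1}$, and $S=S_1S_2\cdots$. The $\mathrm{PPM}^*$ model after reading a prefix $x$: each stored context $c$ records, for each bit $b$, the number of occurrences of $cb$ in $x$. The stored contexts are the empty context and, whenever a string $w$ occurs at least twice as a substring of $x$, the contexts $wb$ for each bit $b$ such that $wb$ occurs in $x$ followed by a further bit (a context is only created once a bit following it has been seen, so that it has a prediction). The model is updated after each bit read. *)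

From mathcomp Require Import all_boot.
Set Implicit Arguments. Unset Strict Implicit. Unset Printing Implicit Defensive.

(* Bits: 0 = false, 1 = true. Strings are seq bool, indexed from 0. *)

Definition windows (n : nat) (x : seq bool) : seq (seq bool) :=
  [seq take n (drop i x) | i <- iota 0 ((size x).+1 - n)].

Definition martin_step (n : nat) (x : seq bool) : seq bool :=
  if uniq (windows n (rcons x false)) then rcons x false
  else if uniq (windows n (rcons x true)) then rcons x true
  else x.

(* At most 2^n bits can be appended (there are 2^n distinct length-n words),
   so 2^n iterations suffice; further iterations would be no-ops. *)
Definition martin (n : nat) : seq bool :=
  iter (2 ^ n) (martin_step n) (nseq n.-1 true).

Definition db (n : nat) : seq bool := drop n.-1 (martin n).

Definition dbi (n i : nat) : seq bool := rot i (db n).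

(* n = 2^s t with t odd *)
Definition sexp (n : nat) : nat := logn 2 n.
Definition todd (n : nat) : nat := n %/ 2 ^ sexp n.

Definition Bblock (n i : nat) : seq bool := flatten (nseq (todd n) (dbi n i)).
Definition Sblock (n : nat) : seq bool :=
  flatten [seq Bblock n i | i <- iota 0 (2 ^ sexp n)].

Definition Sprefix (n : nat) : seq bool :=
  flatten [seq Sblock k | k <- iota 1 n.-1].

Definition occ (w x : seq bool) : nat :=
  count (fun i => take (size w) (drop i x) == w) (iota 0 ((size x).+1 - size w)).

Definition substr (w x : seq bool) : Prop := 0 < occ w x.

Definition ppm_context (x c : seq bool) : Prop :=
  c = [::] \/
  exists (w : seq bool) (b : bool),
    c = rcons w b /\ 2 <= occ w x /\ exists b' : bool, substr (rcons (rcons w b) b') x.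

(* Martin's prefer-zero algorithm, started from 1^(n-1), keeps its length-n windows
   distinct and zero-closed (if v1 is a window, so is v0).  Counting the
   (n-1)-windows as left and as right ends of n-windows shows that it can only stop
   at the suffix 1^(n-1), and that every (n-1)-word then has both extensions; so
   1^(n-1) db(n) contains every n-word and, since db(n) ends with 1^(n-1), every
   n-word occurs in db(n) followed by its own first n-1 bits.  S_n starts with db(n)
   followed by db(n) or db_1(n), both beginning with the first n-1 bits of db(n), so
   its first 2^n+n bits contain every n-word followed by one more bit.  For w = u b
   this gives two occurrences of u (followed by 0 and by 1) and an occurrence of w
   followed by a bit, which is what PPM* needs to store the context w. *)

From mathcomp Require Import all_boot zify.
Set Implicit Arguments. Unset Strict Implicit. Unset Printing Implicit Defensive.

Definition lastn (k : nat) (x : seq bool) : seq bool := drop (size x - k) x.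

Lemma size_lastn (k : nat) (x : seq bool) : k <= size x -> size (lastn k x) = k.
Proof. by move=> le_kx; rewrite size_drop subKn. Qed.

Lemma size_windows (n : nat) (x : seq bool) : size (windows n x) = (size x).+1 - n.
Proof. by rewrite size_map size_iota. Qed.

Lemma windowsP (n : nat) (x w : seq bool) :
  reflect (exists2 i, i + n <= size x & take n (drop i x) = w) (w \in windows n x).
Proof.
apply: (iffP mapP) => [[i] | [i le_x <-]].
  by rewrite mem_iota /= ltn_subRL ltnS addnC => le_x ->; exists i.
by exists i; rewrite // mem_iota /= ltn_subRL ltnS addnC.
Qed.

Lemma mem_windows (n : nat) (x w : seq bool) :
  (w \in windows n x) = (size w == n) && infix w x.
Proof.
apply/windowsP/andP => [[i le_x <-] | [/eqP sw /infixP[s [s' def_x]]]].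
  split; first by rewrite size_takel // size_drop; lia.
  by apply/infixP; exists (take i x), (drop n (drop i x)); rewrite !cat_take_drop.
exists (size s); last by rewrite def_x drop_size_cat // take_size_cat.
by rewrite def_x !size_cat sw addnA leq_addr.
Qed.

Lemma windows_rcons (k : nat) (x : seq bool) (b : bool) : k <= size x ->
  windows k.+1 (rcons x b) = rcons (windows k.+1 x) (rcons (lastn k x) b).
Proof.
move=> le_kx; rewrite /windows size_rcons.
have -> : (size x).+2 - k.+1 = ((size x).+1 - k.+1) + 1 by lia.
rewrite iotaD map_cat cats1 /= add0n; congr rcons.
  apply/eq_in_map => i; rewrite mem_iota => /andP[_ lt_i].
  rewrite -cats1 drop_cat ifT; last by lia.
  by rewrite takel_cat // size_drop; lia.
rewrite subSS drop_rcons ?leq_subr // take_oversize //.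
by rewrite size_rcons size_lastn.
Qed.

Lemma windows_take (k : nat) (x : seq bool) : k <= size x ->
  windows k x = rcons (map (take k) (windows k.+1 x)) (lastn k x).
Proof.
move=> le_kx; rewrite /windows.
have -> : (size x).+1 - k = ((size x).+1 - k.+1) + 1 by lia.
rewrite iotaD map_cat cats1 /= -map_comp; congr rcons.
  by apply/eq_map => i /=; rewrite take_takel.
by rewrite add0n take_oversize // size_drop; lia.
Qed.

Lemma windows_behead (k : nat) (x : seq bool) : k <= size x ->
  windows k x = take k x :: map behead (windows k.+1 x).
Proof.
move=> le_kx; rewrite /windows.
have -> : (size x).+1 - k = 1 + ((size x).+1 - k.+1) by lia.
rewrite iotaD map_cat /= drop0 (iotaDl 1 0) -!map_comp; congr cons.
by apply/eq_map => i /=; rewrite -drop_drop drop1; case: (drop i x).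
Qed.

Lemma windows_cat (k : nat) (a b : seq bool) : k <= size b ->
  windows k.+1 (a ++ b) = windows k.+1 (a ++ take k b) ++ windows k.+1 b.
Proof.
move=> le_kb; rewrite /windows !size_cat size_takel //.
have -> : (size a + size b).+1 - k.+1 = size a + ((size b).+1 - k.+1) by lia.
have -> : (size a + k).+1 - k.+1 = size a by lia.
rewrite iotaD map_cat add0n -{2}[size a]addn0 iotaDl -map_comp; congr cat.
  apply/eq_in_map => i; rewrite mem_iota => /andP[_ lt_ia].
  rewrite !drop_cat lt_ia !take_cat size_drop.
  by case: ltnP => // le_ka; rewrite take_takel //; lia.
by apply/eq_map => i /=; rewrite drop_cat ltnNge leq_addr addKn.
Qed.

Lemma count_pred2 (T : eqType) (s : seq T) (a c : T) : a != c ->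
  count (pred2 a c) s = count_mem a s + count_mem c s.
Proof.
move=> neq_ac; have disj : predI (pred1 a) (pred1 c) =1 pred0.
  by move=> y /=; apply/andP => -[/eqP -> /eqP eq_ac]; rewrite eq_ac eqxx in neq_ac.
by have := count_predUI (pred1 a) (pred1 c) s; rewrite (eq_count disj) count_pred0 addn0.
Qed.

Lemma eq_take_rcons (v w : seq bool) : size w = (size v).+1 ->
  (take (size v) w == v) = (w == rcons v false) || (w == rcons v true).
Proof.
case/lastP: w => [//|u b]; rewrite size_rcons => /eqP; rewrite eqSS => /eqP su.
rewrite -cats1 take_size_cat // cats1 !eqseq_rcons -andb_orr.
by case: b => /=; rewrite andbT.
Qed.

Lemma eq_behead_cons (v w : seq bool) : w != [::] ->
  (behead w == v) = (w == false :: v) || (w == true :: v).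
Proof. by case: w => [//|b u] _; rewrite !eqseq_cons -andb_orl; case: b. Qed.

Lemma occE (w x : seq bool) : occ w x = count_mem w (windows (size w) x).
Proof. by rewrite /windows count_map. Qed.

Lemma occ_gt0 (w x : seq bool) : (0 < occ w x) = infix w x.
Proof. by rewrite occE -has_count has_pred1 mem_windows eqxx. Qed.

Lemma occ_ge2 (u x : seq bool) :
  infix (rcons u false) x -> infix (rcons u true) x -> 1 < occ u x.
Proof.
move=> inf0 inf1; have le_ux : size u <= size x.
  by apply: ltnW; rewrite -(size_rcons u false) size_infix.
rewrite occE (windows_take le_ux) -cats1 count_cat count_map.
apply: leq_trans (leq_addr _ _).
set W := windows (size u).+1 x.
have mem_W b : infix (rcons u b) x -> rcons u b \in W.
  by rewrite mem_windows size_rcons eqxx.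
have ext0 b : take (size u) (rcons u b) = u by rewrite -cats1 take_size_cat.
apply: (@leq_trans (count (pred2 (rcons u false) (rcons u true)) W)).
  rewrite count_pred2 ?eqseq_rcons ?andbF //.
  by apply: (@leq_add 1 1); rewrite -has_count has_pred1 mem_W.
by apply: sub_count => w /orP[] /eqP ->; rewrite /= ext0.
Qed.

Lemma infix_rcons_extend (T : eqType) (w s : seq T) (b : T) :
  infix w s -> exists c, infix (rcons w c) (rcons s b).
Proof.
case/infixP => [p [q ->]]; exists (head b (rcons q b)); apply/infixP.
exists p, (behead (rcons q b)); rewrite !rcons_cat cat_rcons.
by case: q.
Qed.

Lemma ppm_context_all (n : nat) (x : seq bool) :
  (forall w, size w = n -> exists b, infix (rcons w b) x) ->
  forall w, size w = n -> ppm_context x w.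
Proof.
move=> ext w; case/lastP: w => [_|u a sw]; first by left.
right; exists u, a; split=> //.
have inf_u b : infix (rcons u b) x.
  have /ext[c] : size (rcons u b) = n by rewrite size_rcons -sw size_rcons.
  by rewrite -cats1; apply: catr_infix.
split; first exact: occ_ge2.
by have [b inf_w] := ext _ sw; exists b; rewrite /substr occ_gt0.
Qed.

Lemma all_wordsP (n : nat) (W : seq (seq bool)) :
  uniq W -> {in W, forall w, size w = n} ->
  reflect (forall w, size w = n -> w \in W) (size W == 2 ^ n).
Proof.
move=> uW sizeW; set A := map val (enum {: n.-tuple bool}).
have mem_A w : (w \in A) = (size w == n).
  apply/mapP/eqP => [[t _ ->] | sw]; first exact: size_tuple.
  by exists (Tuple (introT eqP sw)); rewrite ?mem_enum.
have uA : uniq A by rewrite map_inj_uniq ?enum_uniq //; exact: val_inj.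
have size_A : size A = 2 ^ n by rewrite size_map -cardE card_tuple card_bool.
have sub_WA : {subset W <= A} by move=> w /sizeW sw; rewrite mem_A sw.
apply: (iffP eqP) => [size_W w sw | all_W].
  have [_ eq_WA] := uniq_min_size uW sub_WA (eq_leq (etrans size_A (esym size_W))).
  by rewrite eq_WA mem_A sw.
rewrite -size_A; apply/perm_size/uniq_perm => // w.
by apply/idP/idP => [/sub_WA | ]; rewrite // mem_A => /eqP /all_W.
Qed.

Lemma iter_behead_rcons (T : Type) (c : T) (j : nat) (s : seq T) :
  iter j (fun s => behead (rcons s c)) s = drop j (s ++ nseq j c).
Proof.
elim: j => [|j IH] /=; first by rewrite drop0 cats0.
rewrite IH -drop_rcons ?size_cat ?size_nseq ?leq_addl // -drop1 drop_drop add1n.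
by rewrite -cats1 -catA -(nseqD j 1) addn1.
Qed.

Lemma prefix_iter_martin_step (n j : nat) (x : seq bool) :
  prefix x (iter j (martin_step n) x).
Proof.
elim: j => [|j IH] /=; first exact: prefix_refl.
apply: prefix_trans IH _; rewrite /martin_step.
by case: ifP => _; [|case: ifP => _]; rewrite ?prefix_rcons ?prefix_refl.
Qed.

Definition zero_closed (W : seq (seq bool)) : Prop :=
  forall v, rcons v true \in W -> rcons v false \in W.

Section Martin.

Variable k : nat.
Local Notation n := k.+1.
Local Notation martin_iter j := (iter j (martin_step n) (nseq k true)).

Definition martin_inv (x : seq bool) : Prop :=
  [/\ prefix (nseq k true) x, uniq (windows n x) & zero_closed (windows n x)].

Definition martin_stuck (x : seq bool) : bool :=
  (rcons (lastn k x) false \in windows n x) && (rcons (lastn k x) true \in windows n x).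

Lemma size_martin_inv x : martin_inv x -> k <= size x.
Proof. by case=> /size_prefix; rewrite size_nseq. Qed.

Lemma martin_stepE x : k <= size x -> uniq (windows n x) ->
  martin_step n x =
    if rcons (lastn k x) false \notin windows n x then rcons x false
    else if rcons (lastn k x) true \notin windows n x then rcons x true
    else x.
Proof.
by move=> le_kx ux; rewrite /martin_step !windows_rcons // !rcons_uniq ux !andbT.
Qed.

Lemma martin_step_inv x : martin_inv x -> martin_inv (martin_step n x).
Proof.
move=> inv; have le_kx := size_martin_inv inv; case: inv => pre ux zc.
have inv_rcons b : rcons (lastn k x) b \notin windows n x ->
    (b -> rcons (lastn k x) false \in windows n x) ->
    martin_inv (rcons x b).
  move=> fresh in0; split; first exact: prefix_trans pre (prefix_rcons x b).
    by rewrite windows_rcons // rcons_uniq fresh.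
  move=> v; rewrite windows_rcons // !mem_rcons !in_cons.
  case/orP => [|/zc ->]; last by rewrite orbT.
  by rewrite eqseq_rcons => /andP[/eqP -> /eqP eb]; rewrite in0 ?orbT -?eb.
rewrite martin_stepE //; case: ifPn => [fresh0 | /negPn in0]; first exact: inv_rcons.
by case: ifPn => // fresh1; apply: inv_rcons.
Qed.

Lemma martin_step_progress x : martin_inv x ->
  if martin_stuck x then martin_step n x = x else size (martin_step n x) = (size x).+1.
Proof.
move=> inv; have le_kx := size_martin_inv inv; case: inv => _ ux _.
rewrite martin_stepE // /martin_stuck.
by case: (rcons _ false \in _); case: (rcons _ true \in _); rewrite /= ?size_rcons.
Qed.

Lemma martin_iter_inv j :
  martin_inv (martin_iter j) /\
  (martin_stuck (martin_iter j) \/ size (martin_iter j) = k + j).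
Proof.
elim: j => [|j [inv grow]].
  have no_windows : windows n (nseq k true) = [::].
    by apply/size0nil; rewrite size_windows size_nseq subnn.
  split; last by right; rewrite size_nseq addn0.
  by split; rewrite ?no_windows ?prefix_refl.
split; first exact: martin_step_inv.
have := martin_step_progress inv; rewrite iterS.
case: ifP => [stuck eq_x | not_stuck size_x]; first by left; rewrite eq_x.
by right; case: grow => [|size_j]; rewrite ?not_stuck // size_x size_j addnS.
Qed.

(* Flow conservation at v in the de Bruijn graph: count the (n-1)-windows equal to v
   through [windows_take] and through [windows_behead]. *)
Lemma windows_balance x v : k <= size x -> uniq (windows n x) -> size v = k ->
  (rcons v false \in windows n x) + (rcons v true \in windows n x) + (lastn k x == v) =
  (take k x == v) + ((false :: v \in windows n x) + (true :: v \in windows n x)).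
Proof.
move=> le_kx ux sv; set W := windows n x.
have sizeW w : w \in W -> size w = n by rewrite mem_windows => /andP[/eqP].
have count2 a c : a != c -> count (pred2 a c) W = (a \in W) + (c \in W).
  by move=> neq_ac; rewrite count_pred2 // !count_uniq_mem.
have out_v :
    count (preim (take k) (pred1 v)) W = (rcons v false \in W) + (rcons v true \in W).
  rewrite -count2 ?eqseq_rcons ?andbF //; apply: eq_in_count => w /sizeW sw /=.
  by rewrite -sv eq_take_rcons // sw sv.
have in_v : count (preim behead (pred1 v)) W = (false :: v \in W) + (true :: v \in W).
  rewrite -count2 ?eqseq_cons //; apply: eq_in_count => w /sizeW sw /=.
  by rewrite eq_behead_cons // -size_eq0 sw.
have := congr1 (count_mem v) (windows_take le_kx).
rewrite {1}(windows_behead le_kx) -cats1 count_cat /= count_map addn0 count_map.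
by rewrite out_v in_v.
Qed.

Lemma stuck_lastn x : martin_inv x -> martin_stuck x -> lastn k x = nseq k true.
Proof.
move=> inv; have le_kx := size_martin_inv inv; case: inv => pre ux _ /andP[in0 in1].
move: pre; rewrite prefixE size_nseq => /eqP take_x.
have := windows_balance le_kx ux (size_lastn le_kx); rewrite in0 in1 eqxx take_x.
by case: eqP => [-> //|_]; case: (_ \in _); case: (_ \in _).
Qed.

Lemma stuck_windows_all x : martin_inv x -> martin_stuck x ->
  forall w, size w = n -> w \in windows n x.
Proof.
move=> inv stuck; have le_kx := size_martin_inv inv.
have last_x := stuck_lastn inv stuck.
case: inv => pre ux zc; move: pre; rewrite prefixE size_nseq => /eqP take_x.
set W := windows n x.
pose deg v := (rcons v false \in W) + (rcons v true \in W).
have balanced v : size v = k -> deg v = (false :: v \in W) + (true :: v \in W).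
  by move=> sv; have := windows_balance le_kx ux sv; rewrite last_x take_x addnC => /addnI.
have deg_ones : deg (nseq k true) = 2.
  by move: stuck; rewrite /martin_stuck last_x /deg => /andP[-> ->].
(* If v misses an extension it misses v1, so its successor behead (v1) misses an
   incoming edge and hence an extension; k such shifts reach 1^k, which has both. *)
have deg_shift v : size v = k -> deg v < 2 -> deg (behead (rcons v true)) < 2.
  move=> sv lt2; have out1 : rcons v true \notin W.
    by apply: contraTN lt2 => in1; rewrite /deg in1 (zc _ in1).
  case: v sv out1 lt2 => [// | b v sv out1 _] /=.
  rewrite balanced ?size_rcons //.
  by case: b {sv} out1 => /negbTE ->; case: (_ \in _).
have deg2 v : size v = k -> deg v = 2.
  move=> sv; have le2 : deg v <= 2 by rewrite /deg; case: (_ \in _); case: (_ \in _).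
  apply/eqP; rewrite eqn_leq le2 leqNgt; apply/negP => lt2.
  have iter_lt2 j : let v' := iter j (fun s => behead (rcons s true)) v in
      size v' = k /\ deg v' < 2.
    elim: j => [//|j [sv' lt2']] /=.
    by rewrite size_behead size_rcons sv'; split => //; apply: deg_shift.
  by have [_] := iter_lt2 k; rewrite iter_behead_rcons -sv drop_size_cat // sv deg_ones.
case/lastP => [//|u b]; rewrite size_rcons => -[su].
by have := deg2 u su; rewrite /deg; case: b; case: (_ \in _); case: (_ \in _).
Qed.

Lemma martin_inv_stuck : martin_inv (martin n) /\ martin_stuck (martin n).
Proof.
(* Unless stuck earlier, after 2^n steps the distinct windows are all n-words. *)
have [inv [//|size_x]] := martin_iter_inv (2 ^ n); split=> //.
have le_kx := size_martin_inv inv; case: inv => _ ux _.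
have sizeW w : w \in windows n (martin_iter (2 ^ n)) -> size w = n.
  by rewrite mem_windows => /andP[/eqP].
have /all_wordsP full : size (windows n (martin_iter (2 ^ n))) == 2 ^ n.
  by rewrite size_windows size_x subSS addKn.
by rewrite /martin_stuck !(full ux sizeW) // size_rcons size_lastn.
Qed.

Lemma uniq_windows_ones_zeros j : j <= n -> uniq (windows n (nseq k true ++ nseq j false)).
Proof.
move=> le_jn; set y := nseq k true ++ nseq j false.
have zeros i : i < j -> count negb (take n (drop i y)) = i.+1.
  move=> lt_ij; have le_ik : i <= k by rewrite -ltnS (leq_trans lt_ij).
  rewrite /y -(subnKC le_ik) nseqD -catA drop_size_cat ?size_nseq //.
  rewrite (subnKC le_ik) take_cat size_nseq ifN; last by rewrite -leqNgt leqW ?leq_subr.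
  rewrite take_nseq ?count_cat ?count_nseq /= ?mul0n ?mul1n; lia.
rewrite /windows size_cat !size_nseq subSS addKn.
rewrite map_inj_in_uniq ?iota_uniq // => i1 i2; rewrite !mem_iota /= => lt1 lt2 eq_win.
by have := zeros _ lt1; rewrite eq_win zeros // => -[].
Qed.

Lemma martin_iter_zeros j : j <= n -> martin_iter j = nseq k true ++ nseq j false.
Proof.
elim: j => [|j IH] lt_jn; first by rewrite cats0.
have snoc0 : rcons (nseq k true ++ nseq j false) false = nseq k true ++ nseq j.+1 false.
  by rewrite rcons_cat -cats1 -(nseqD j 1) addn1.
rewrite iterS IH; last exact: ltnW.
by rewrite /martin_step snoc0 uniq_windows_ones_zeros.
Qed.

Lemma martin_db : martin n = nseq k true ++ db n.
Proof.
have [[pre _ _] _] := martin_inv_stuck.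
move: pre; rewrite prefixE size_nseq => /eqP take_m.
by rewrite /db -{1}(cat_take_drop k (martin n)) take_m.
Qed.

Lemma size_db : size (db n) = 2 ^ n.
Proof.
have [inv stuck] := martin_inv_stuck; case: (inv) => _ ux _.
have sizeW w : w \in windows n (martin n) -> size w = n.
  by rewrite mem_windows => /andP[/eqP].
have /eqP : size (windows n (martin n)) == 2 ^ n.
  exact/(all_wordsP ux sizeW)/stuck_windows_all.
by rewrite size_windows martin_db size_cat size_nseq subSS addKn.
Qed.

Lemma leq_n_size_db : n <= size (db n).
Proof. by rewrite size_db; apply: ltnW; apply: ltn_expl. Qed.

Lemma db_prefix_zeros : prefix (nseq n false) (db n).
Proof.
have le_n : n <= 2 ^ n := ltnW (ltn_expl n (isT : 1 < 2)).
have := prefix_iter_martin_step n (2 ^ n - n) (martin_iter n).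
rewrite -iterD (subnK le_n) (martin_iter_zeros (leqnn n)) -/(martin n) martin_db.
by rewrite prefix_catr // eqxx.
Qed.

Lemma db_suffix_ones : suffix (nseq k true) (db n).
Proof.
have [inv stuck] := martin_inv_stuck; have := stuck_lastn inv stuck.
rewrite suffixE size_nseq /lastn martin_db size_cat size_nseq addKn => <-.
by rewrite drop_cat size_nseq ltnNge (ltnW (leq_n_size_db)).
Qed.

Lemma infix_db_cyclic w : size w = n -> infix w (db n ++ take k (db n)).
Proof.
move=> sw; have := stuck_windows_all (martin_inv_stuck).1 (martin_inv_stuck).2 sw.
rewrite martin_db windows_cat ?(ltnW leq_n_size_db) // mem_cat !mem_windows sw eqxx /=.
case/orP => [inf | inf]; last exact: infix_catr.
have [d' def_db] := suffixP db_suffix_ones.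
by rewrite {1}def_db -catA; apply: infix_catl.
Qed.

Lemma take_rot1_db : take k (rot 1 (db n)) = take k (db n).
Proof.
have [s ->] := prefixP db_prefix_zeros.
rewrite [RHS]takel_cat ?size_nseq // take_nseq //.
by rewrite /= rot1_cons rcons_cat take_size_cat ?size_nseq.
Qed.

End Martin.

Lemma Sblock_cat (n : nat) : 1 < n ->
  exists rest, Sblock n = db n ++ dbi n (todd n == 1) ++ rest.
Proof.
move=> n_gt1; have n_eq : todd n * 2 ^ sexp n = n by rewrite divnK // pfactor_dvdnn.
rewrite /Sblock /Bblock /dbi.
case: (todd n) n_eq => [|[|t]] n_eq; first by move: n_gt1; rewrite -n_eq.
  have -> : 2 ^ sexp n = (n - 2).+2 by move: n_eq n_gt1; rewrite mul1n => ->; lia.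
  by rewrite /= rot0 !cats0; eexists.
have -> : 2 ^ sexp n = (2 ^ sexp n).-1.+1 by rewrite prednK // expn_gt0.
by rewrite /= rot0 -!catA; eexists.
Qed.

Theorem lemma2 (n : nat) : 2 <= n ->
  forall w : seq bool, size w = n ->
    ppm_context (Sprefix n ++ take (2 ^ n + n) (Sblock n)) w.
Proof.
case: n => [//|k] n_gt1; apply: ppm_context_all => w sw.
have [rest ->] := Sblock_cat n_gt1.
set d := db k.+1; set z := dbi k.+1 _.
have n_le_z : k.+1 <= size z by rewrite size_rot leq_n_size_db.
have take_z : take k z = take k d.
  by rewrite /z /dbi; case: (_ == 1); rewrite ?rot0 ?take_rot1_db.
have -> : take (2 ^ k.+1 + k.+1) (d ++ z ++ rest) = rcons (d ++ take k d) (nth false z k).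
  rewrite take_cat size_db ltnNge leq_addr addKn takel_cat //.
  by rewrite (take_nth false) // take_z rcons_cat.
have [c inf] := infix_rcons_extend (nth false z k) (infix_db_cyclic sw).
by exists c; apply: infix_catl.
Qed.
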